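(* Assume $\mathcal W$ and $\mathcal V$ are finite sets. Let $h_\star=\langle f_\star,g_\star\rangle$, $\hat h=\langle\hat f,\hat g\rangle$ with $f_\star,\hat f:\mathcal W\to\mathbb R^p$, $g_\star,\hat g:\mathcal V\to\mathbb R^p$, and let $\mathcal D_{\mathcal W,i}$, $\mathcal D_{\mathcal V,j}$ ($i,j\in\{1,2\}$) be distributions on $\mathcal W$, $\mathcal V$ with $\mathcal D_{i\otimes j}:=\mathcal D_{\mathcal W,i}\otimes\mathcal D_{\mathcal V,j}$. Suppose that for all $(i,j)\ne(2,2)$: $\mathcal R(\hat h;\mathcal D_{i\otimes j})\le\epsilon^2$ and $\mathbb E_{\mathcal D_{i\otimes j}}[h_\star(w,v)^2]\le M_\star^2$, and that $\epsilon<\sigma_\star/2$, where $\sigma_\star^2:=\sigma_p(\mathbb E_{\mathcal D_{\mathcal W,1}}[f_\star f_\star^\top])\,\sigma_p(\mathbb E_{\mathcal D_{\mathcal V,1}}[g_\star g_\star^\top])>0$. Then $\mathcal R(\hat h;\mathcal D_{2\otimes2})\le 64\,\epsilon^2\frac{M_\star^4}{\sigma_\star^4}$.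
   Context: For a scalar predictor $\hat h$ and distribution $\mathcal D$ on $\mathcal W\times\mathcal V$, $\mathcal R(\hat h;\mathcal D):=\mathbb E_{(w,v)\sim\mathcal D}[(h_\star(w,v)-\hat h(w,v))^2]$. $\sigma_p$ denotes the $p$-th largest singular value. *)

From HB Require Import structures.
From mathcomp Require Import all_boot all_order all_algebra.
From mathcomp Require Import boolp classical_sets reals.
Set Implicit Arguments. Unset Strict Implicit. Unset Printing Implicit Defensive.
Import Order.TTheory GRing.Theory Num.Theory.
Local Open Scope ring_scope.
Local Open Scope classical_set_scope.

Section Defs.
Variable R : realType.

Definition is_distr (T : finType) (D : T -> R) : Prop :=
  (forall x, 0 <= D x) /\ \sum_(x : T) D x = 1.

Definition expect (T : finType) (D : T -> R) (F : T -> R) : R :=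
  \sum_(x : T) D x * F x.

Definition expect_mx (T : finType) (p : nat) (D : T -> R) (F : T -> 'M[R]_p)
  : 'M[R]_p := \sum_(x : T) D x *: F x.

Definition second_moment (T : finType) (p : nat) (D : T -> R)
  (f : T -> 'cV[R]_p) : 'M[R]_p := expect_mx D (fun x => f x *m (f x)^T).

Definition bilin (W V : finType) (p : nat) (f : W -> 'cV[R]_p)
  (g : V -> 'cV[R]_p) (w : W) (v : V) : R :=
  \sum_(k < p) f w k 0 * g v k 0.

Definition expect_prod (W V : finType) (DW : W -> R) (DV : V -> R)
  (F : W -> V -> R) : R :=
  \sum_(w : W) \sum_(v : V) DW w * DV v * F w v.

Definition risk (W V : finType) (DW : W -> R) (DV : V -> R)
  (hstar hhat : W -> V -> R) : R :=
  expect_prod DW DV (fun w v => (hstar w v - hhat w v) ^+ 2).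

Definition singular_values (p : nat) (A : 'M[R]_p) : set R :=
  [set s | 0 <= s /\ root (char_poly (A^T *m A)) (s ^+ 2)].

(* sigma_p(A) for a p x p matrix A: the p-th largest singular value, i.e.
   the smallest one. *)
Definition sigma_last (p : nat) (A : 'M[R]_p) : R :=
  inf (singular_values A).

End Defs.

From HB Require Import structures.
From mathcomp Require Import all_boot all_order all_algebra.
From mathcomp Require Import boolp classical_sets functions reals.
From mathcomp Require Import topology normedtype derive matrix_normedtype.
From mathcomp Require Import ring lra.
Set Implicit Arguments. Unset Strict Implicit. Unset Printing Implicit Defensive.
Import Order.TTheory GRing.Theory Num.Theory.
Import numFieldNormedType.Exports.
Local Open Scope ring_scope.

(* Write del = h_star - h_hat and take all of the following moments under
   D_{1 (x) 1}: Sf = E[f f^T], Sg = E[g g^T] (for the true features),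
   K = E[f fhat^T], C = E[ghat g^T], the error correlation E0 = E[del f g^T]
   and the conditional error means c(v) = E_W[del(., v) f],
   a(w) = E_V[del(w, .) g].  Then K C = Sf Sg - E0, K ghat(v) = Sf g(v) - c(v)
   and C^T fhat(w) = Sg f(w) - a(w).  The smallest singular values sf, sg of
   Sf, Sg are coercivity constants (a Rayleigh-quotient argument on the
   compact unit sphere); since 4 eps^2 <= sf sg, the matrix
   B = Sg - Sf^-1 E0 is coercive as well.  Solving B y = g(v) - Sf^-1 c(v)
   gives ghat(v) = C y and hence, for EVERY pair (w, v),
       del(w, v) = <f w, Sf^-1 c v> - <f w, Sf^-1 E0 y> + <a w, y>.
   Cauchy-Schwarz and the risk and moment bounds on the three observed
   product distributions control each term, and the product structure of
   D_{2 (x) 2} lets the expectation factor, giving 57 eps^2 M^4 / sigma^4. *)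

Section WeightedCauchySchwarz.
Variable R : realFieldType.

Lemma sum_sym2 (I : finType) (F : I -> I -> R) :
  \sum_i \sum_j (F i j + F j i) = 2 * \sum_i \sum_j F i j.
Proof.
have split_inner i : \sum_j (F i j + F j i) = \sum_j F i j + \sum_j F j i.
  exact: big_split.
rewrite (eq_bigr _ (fun i _ => split_inner i)) big_split /=.
by rewrite [X in _ + X]exchange_big mulr2n mulrDl mul1r.
Qed.

(* Cauchy-Schwarz for a nonnegative weight D, via Lagrange's identity
   2 (E[a^2] E[b^2] - E[ab]^2) = E_{i,j}[(a_i b_j - a_j b_i)^2]. *)
Lemma weighted_cauchy_schwarz (I : finType) (D a b : I -> R) :
  (forall i, 0 <= D i) ->
  (\sum_i D i * a i * b i) ^+ 2 <=
  (\sum_i D i * a i ^+ 2) * (\sum_i D i * b i ^+ 2).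
Proof.
move=> D_ge0; rewrite -subr_ge0.
have lagrange : \sum_i \sum_j D i * D j * (a i * b j - a j * b i) ^+ 2 =
    2 * ((\sum_i D i * a i ^+ 2) * (\sum_i D i * b i ^+ 2)
         - (\sum_i D i * a i * b i) ^+ 2).
  pose F i j := D i * a i ^+ 2 * (D j * b j ^+ 2)
                - D i * a i * b i * (D j * a j * b j).
  transitivity (\sum_i \sum_j (F i j + F j i)).
    by apply: eq_bigr => i _; apply: eq_bigr => j _; rewrite /F /=; ring.
  rewrite sum_sym2 expr2 !big_distrlr -sumrB; congr (2 * _).
  by apply: eq_bigr => i _; rewrite -sumrB.
have : 0 <= \sum_i \sum_j D i * D j * (a i * b j - a j * b i) ^+ 2.
  apply: sumr_ge0 => i _; apply: sumr_ge0 => j _.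
  by rewrite mulr_ge0 ?sqr_ge0 // mulr_ge0.
by rewrite lagrange pmulr_rge0.
Qed.

End WeightedCauchySchwarz.

Section DotProduct.
Variables (R : realFieldType) (p : nat).
Implicit Types x y z : 'cV[R]_p.

Definition dot x y : R := (x^T *m y) 0 0.

Lemma dotE x y : dot x y = \sum_k x k 0 * y k 0.
Proof. by rewrite /dot !mxE; apply: eq_bigr => k _; rewrite !mxE. Qed.

Lemma dotC x y : dot x y = dot y x.
Proof. by rewrite !dotE; apply: eq_bigr => k _; rewrite mulrC. Qed.

Lemma dotDr x y z : dot x (y + z) = dot x y + dot x z.
Proof. by rewrite /dot mulmxDr mxE. Qed.

Lemma dotBr x y z : dot x (y - z) = dot x y - dot x z.
Proof. by rewrite /dot mulmxBr !mxE. Qed.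

Lemma dotZr x y (k : R) : dot x (k *: y) = k * dot x y.
Proof. by rewrite /dot -scalemxAr mxE. Qed.

Lemma dotDl x y z : dot (y + z) x = dot y x + dot z x.
Proof. by rewrite dotC dotDr !(dotC x). Qed.

Lemma dotBl x y z : dot (y - z) x = dot y x - dot z x.
Proof. by rewrite dotC dotBr !(dotC x). Qed.

Lemma dotZl x y (k : R) : dot (k *: y) x = k * dot y x.
Proof. by rewrite dotC dotZr dotC. Qed.

Lemma dot0r x : dot x 0 = 0.
Proof. by rewrite /dot mulmx0 mxE. Qed.

Lemma dot_sumr (I : finType) x (F : I -> 'cV[R]_p) :
  dot x (\sum_i F i) = \sum_i dot x (F i).
Proof. by rewrite /dot mulmx_sumr summxE. Qed.

Lemma dot_suml (I : finType) x (F : I -> 'cV[R]_p) :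
  dot (\sum_i F i) x = \sum_i dot (F i) x.
Proof. by rewrite dotC dot_sumr; apply: eq_bigr => i _; rewrite dotC. Qed.

Lemma dot_mulmx x (A : 'M[R]_p) y : dot x (A *m y) = dot (A^T *m x) y.
Proof. by rewrite /dot trmx_mul trmxK mulmxA. Qed.

Lemma outer_mulmx x y z : x *m y^T *m z = dot y z *: x.
Proof. by rewrite -mulmxA [y^T *m z]mx11_scalar mul_mx_scalar. Qed.

Lemma dot_ge0 x : 0 <= dot x x.
Proof. by rewrite dotE; apply: sumr_ge0 => k _; rewrite -expr2 sqr_ge0. Qed.

Lemma dot_eq0 x : dot x x = 0 -> x = 0.
Proof.
rewrite dotE => /eqP; rewrite psumr_eq0 => [/allP x0|k _]; last first.
  by rewrite -expr2 sqr_ge0.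
apply/matrixP => i j; rewrite (ord1 j) mxE.
by move: (x0 i (mem_index_enum _)); rewrite -expr2 sqrf_eq0 => /eqP.
Qed.

Lemma cauchy_schwarz x y : dot x y ^+ 2 <= dot x x * dot y y.
Proof.
have dot1 u v : dot u v = \sum_k 1 * u k 0 * v k 0.
  by rewrite dotE; apply: eq_bigr => k _; rewrite mul1r.
have norm1 u : dot u u = \sum_k 1 * u k 0 ^+ 2.
  by rewrite dotE; apply: eq_bigr => k _; rewrite mul1r expr2.
by rewrite dot1 !norm1; apply: weighted_cauchy_schwarz => _; exact: ler01.
Qed.

(* Parallelogram-type bound |x - z|^2 <= 3/2 |x|^2 + 3 |z|^2,
   from 0 <= |x + 2 z|^2. *)
Lemma dot_sub_le x z : dot (x - z) (x - z) <= 3 / 2 * dot x x + 3 * dot z z.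
Proof.
have := dot_ge0 (x + 2%:R *: z).
rewrite !dotBl !dotBr !dotDl !dotDr !dotZl !dotZr (dotC z x); lra.
Qed.

Lemma cauchy_schwarz_mean (I : finType) (D e : I -> R) (g : I -> 'cV[R]_p) :
  (forall i, 0 <= D i) ->
  dot (\sum_i (D i * e i) *: g i) (\sum_i (D i * e i) *: g i)
   <= (\sum_i D i * e i ^+ 2) * (\sum_i D i * dot (g i) (g i)).
Proof.
move=> D_ge0; set s := \sum_i _.
have s_dot : dot s s = \sum_i D i * e i * dot (g i) s.
  by rewrite {1}/s dot_suml; apply: eq_bigr => i _; rewrite dotZl.
have Ee2_ge0 : 0 <= \sum_i D i * e i ^+ 2.
  by apply: sumr_ge0 => i _; rewrite mulr_ge0 ?sqr_ge0.
have Eg_ge0 : 0 <= \sum_i D i * dot (g i) (g i).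
  by apply: sumr_ge0 => i _; rewrite mulr_ge0 ?dot_ge0.
have proj_le : \sum_i D i * dot (g i) s ^+ 2
               <= (\sum_i D i * dot (g i) (g i)) * dot s s.
  rewrite mulr_suml; apply: ler_sum => i _.
  by rewrite -mulrA ler_wpM2l ?cauchy_schwarz.
have := weighted_cauchy_schwarz e (fun i => dot (g i) s) D_ge0.
rewrite -s_dot => cs.
have [s0|s_gt0] := eqVneq (dot s s) 0; first by rewrite s0 mulr_ge0.
have s_pos : 0 < dot s s by rewrite lt0r s_gt0 dot_ge0.
rewrite -(ler_pM2r s_pos) -expr2; apply: (le_trans cs).
by rewrite -mulrA ler_wpM2l.
Qed.

End DotProduct.

Section SecondMoment.
Variables (R : realType) (p : nat) (T : finType) (D : T -> R).
Variable f : T -> 'cV[R]_p.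

Lemma second_moment_qf x :
  dot x (second_moment D f *m x) = \sum_t D t * dot (f t) x ^+ 2.
Proof.
rewrite /second_moment /expect_mx mulmx_suml dot_sumr; apply: eq_bigr => t _.
by rewrite -scalemxAl dotZr outer_mulmx dotZr dotC expr2.
Qed.

Lemma second_moment_sym : (second_moment D f)^T = second_moment D f.
Proof.
rewrite /second_moment /expect_mx linear_sum; apply: eq_bigr => t _.
by rewrite linearZ /= trmx_mul trmxK.
Qed.

Lemma second_moment_psd x :
  (forall t, 0 <= D t) -> 0 <= dot x (second_moment D f *m x).
Proof.
by move=> D_ge0; rewrite second_moment_qf; apply: sumr_ge0 => t _;
  rewrite mulr_ge0 ?sqr_ge0.
Qed.

End SecondMoment.

Section Coercivity.
Variables (R : realFieldType) (p : nat).
Implicit Types (A B : 'M[R]_p) (x y u : 'cV[R]_p).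

Definition coercive (s : R) A := forall x, s * dot x x <= dot x (A *m x).

Lemma coercive_qf_ge0 s A x : 0 <= s -> coercive s A -> 0 <= dot x (A *m x).
Proof. by move=> s_ge0 A_coer; apply: le_trans (A_coer x); rewrite mulr_ge0 ?dot_ge0. Qed.

Lemma trivial_kernel_unitmx A : (forall x, A *m x = 0 -> x = 0) -> A \in unitmx.
Proof.
move=> A_inj; rewrite -unitmx_tr unitmxE unitfE; apply/negP => /det0P [v v0 vA].
have : A *m v^T = 0 by rewrite -(trmxK A) -trmx_mul vA trmx0.
by move/A_inj/(congr1 trmx); rewrite trmxK trmx0 => /eqP; rewrite (negbTE v0).
Qed.

Lemma coercive_unitmx s A : 0 < s -> coercive s A -> A \in unitmx.
Proof.
move=> s_gt0 A_coer; apply: trivial_kernel_unitmx => x Ax0; apply: dot_eq0.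
apply/le_anti; rewrite dot_ge0 andbT -(pmulr_rle0 _ s_gt0).
by have := A_coer x; rewrite Ax0 dot0r.
Qed.

Lemma coercive_inv_dot s A y :
  0 < s -> coercive s A -> s * dot (invmx A *m y) y <= dot y y.
Proof.
move=> s_gt0 A_coer; set t := invmx A *m y.
have At : A *m t = y by rewrite mulKVmx // (coercive_unitmx s_gt0 A_coer).
have t_coer := A_coer t; rewrite At in t_coer.
have cs := cauchy_schwarz t y.
have [->|ty_neq0] := eqVneq (dot t y) 0; first by rewrite mulr0 dot_ge0.
have ty_gt0 : 0 < dot t y.
  by rewrite lt0r ty_neq0 (le_trans _ t_coer) // mulr_ge0 ?dot_ge0 ?ltW.
rewrite -(ler_pM2r ty_gt0); have := dot_ge0 y; nra.
Qed.

Lemma coercive_inv_norm s A y : 0 < s -> coercive s A ->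
  dot (invmx A *m y) (invmx A *m y) <= dot y y / s ^+ 2.
Proof.
move=> s_gt0 A_coer; rewrite ler_pdivlMr ?exprn_gt0 //.
have Au : A \in unitmx := coercive_unitmx s_gt0 A_coer.
have t_coer := A_coer (invmx A *m y); rewrite mulKVmx // in t_coer.
apply: le_trans (coercive_inv_dot y s_gt0 A_coer).
by rewrite mulrC expr2 -mulrA ler_pM2l.
Qed.

(* A symmetric positive semidefinite B kills every u with <u, B u> = 0:
   otherwise the form would be negative at u - t B u for a small t > 0. *)
Lemma psd_qf_eq0 B u : B^T = B -> (forall x, 0 <= dot x (B *m x)) ->
  dot u (B *m u) = 0 -> B *m u = 0.
Proof.
move=> B_sym B_psd Bu0; set z := B *m u; apply: dot_eq0.
set N := dot z z; set q := dot z (B *m z).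
have q_ge0 : 0 <= q := B_psd z.
have along t : dot (u + t *: z) (B *m (u + t *: z)) = 2 * t * N + t ^+ 2 * q.
  rewrite mulmxDr -scalemxAr !dotDl !dotDr !dotZl !dotZr Bu0.
  have -> : dot u (B *m z) = N by rewrite dot_mulmx B_sym.
  rewrite -/z -/q -/N; ring.
have q1_neq0 : q + 1 != 0 by rewrite gt_eqF // ltr_pwDr.
have := B_psd (u + (- N / (q + 1)) *: z); rewrite along => h.
have : 0 <= (q + 1) ^+ 2 * (2 * (- N / (q + 1)) * N + (- N / (q + 1)) ^+ 2 * q).
  by rewrite mulr_ge0 ?sqr_ge0.
have -> : (q + 1) ^+ 2 * (2 * (- N / (q + 1)) * N + (- N / (q + 1)) ^+ 2 * q)
          = - (N ^+ 2 * (q + 2)) by field.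
rewrite oppr_ge0 pmulr_lle0 ?ltr_wpDl // => N2_le0.
by apply/eqP; rewrite -sqrf_eq0 eq_le N2_le0 sqr_ge0.
Qed.

(* A unit vector at which the Rayleigh quotient of a symmetric A attains its
   minimum is an eigenvector for that minimum. *)
Lemma rayleigh_min_eigenvector A u : A^T = A ->
  dot u u = 1 -> coercive (dot u (A *m u)) A -> A *m u = dot u (A *m u) *: u.
Proof.
move=> A_sym u1 A_coer; set m := dot u (A *m u).
have qf_shift x : dot x ((A - m%:M) *m x) = dot x (A *m x) - m * dot x x.
  by rewrite mulmxBl dotBr mul_scalar_mx dotZr.
have : (A - m%:M) *m u = 0.
  apply: psd_qf_eq0 => [|x|]; first by rewrite linearB /= A_sym tr_scalar_mx.
    by rewrite qf_shift subr_ge0.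
  by rewrite qf_shift u1 mulr1 subrr.
by move/eqP; rewrite mulmxBl subr_eq0 mul_scalar_mx => /eqP.
Qed.

End Coercivity.

Section Perturbation.
Variables (R : realFieldType) (p : nat) (Sf Sg E : 'M[R]_p) (sf sg e2 : R).
Hypotheses (sf_gt0 : 0 < sf) (sg_gt0 : 0 < sg) (e2_ge0 : 0 <= e2).
Hypothesis small : 4 * e2 <= sf * sg.
Hypotheses (Sf_sym : Sf^T = Sf) (Sf_coer : coercive sf Sf) (Sg_coer : coercive sg Sg).
Hypothesis E_small :
  forall x y, dot x (E *m y) ^+ 2 <= e2 * dot x (Sf *m x) * dot y (Sg *m y).

Let P := invmx Sf *m E.

(* sf |P y|^2 <= e2 <y, Sg y>, by duality: <z, P y> = <Sf^-1 z, E y>. *)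
Lemma perturbation_norm y : sf * dot (P *m y) (P *m y) <= e2 * dot y (Sg *m y).
Proof.
set v := P *m y; set Q := dot y (Sg *m y).
have Q_ge0 : 0 <= Q := coercive_qf_ge0 y (ltW sg_gt0) Sg_coer.
have Sf_unit := coercive_unitmx sf_gt0 Sf_coer.
have dual z : sf * dot z v ^+ 2 <= e2 * Q * dot z z.
  set t := invmx Sf *m z.
  have -> : dot z v = dot t (E *m y).
    by rewrite /v /P -mulmxA [LHS]dot_mulmx trmx_inv Sf_sym.
  have := E_small t y; rewrite mulKVmx // -/Q => Et.
  have := coercive_inv_dot z sf_gt0 Sf_coer; rewrite -/t => tz.
  have eQ_ge0 : 0 <= e2 * Q by rewrite mulr_ge0.
  have := ler_wpM2l eQ_ge0 tz; have := ler_wpM2l (ltW sf_gt0) Et; nra.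
have := dual v; rewrite expr2 mulrA.
have [->|v_neq0] := eqVneq (dot v v) 0.
  by move=> _; rewrite mulr0 mulr_ge0.
by rewrite ler_pM2r // lt0r v_neq0 dot_ge0.
Qed.

Lemma perturbation_dot y : 2 * dot y (P *m y) <= dot y (Sg *m y).
Proof.
set Q := dot y (Sg *m y); set v := P *m y.
have Q_ge0 : 0 <= Q := coercive_qf_ge0 y (ltW sg_gt0) Sg_coer.
have cs := cauchy_schwarz y v.
have hy := Sg_coer y; have hv := perturbation_norm y.
have := dot_ge0 y; have := dot_ge0 v => v_ge0 y_ge0.
have prod : sg * dot y y * (sf * dot v v) <= Q * (e2 * Q).
  by apply: ler_pM => //; rewrite mulr_ge0 // ltW.
have : (sf * sg) * (dot y v) ^+ 2 <= (sf * sg) * (Q ^+ 2 / 4).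
  apply: (le_trans (ler_wpM2l _ cs)); first by rewrite mulr_ge0 // ltW.
  apply: (le_trans (y := Q * (e2 * Q))); first by apply: le_trans prod; nra.
  have := ler_wpM2r (sqr_ge0 Q) small; nra.
rewrite ler_pM2l ?mulr_gt0 // => sq; nra.
Qed.

Lemma perturbed_coercive y :
  sg * dot y (Sg *m y) <= 4 * dot ((Sg - P) *m y) ((Sg - P) *m y).
Proof.
set Q := dot y (Sg *m y); set By := (Sg - P) *m y.
have Q_ge0 : 0 <= Q := coercive_qf_ge0 y (ltW sg_gt0) Sg_coer.
have half : Q / 2 <= dot y By.
  by have := perturbation_dot y; rewrite /By mulmxBl dotBr -/Q; lra.
have cs := cauchy_schwarz y By; have hy : sg * dot y y <= Q := Sg_coer y.
have := dot_ge0 y; have := dot_ge0 By => B_ge0 y_ge0.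
have [Q0|Q_neq0] := eqVneq Q 0; first by rewrite Q0 mulr0 mulr_ge0.
have Q_gt0 : 0 < Q by rewrite lt0r Q_neq0.
rewrite -(ler_pM2r Q_gt0).
have sq : (Q / 2) ^+ 2 <= dot y By ^+ 2 by rewrite !expr2 ler_pM // divr_ge0.
have := ler_wpM2l (ltW sg_gt0) (le_trans sq cs).
have := ler_wpM2r B_ge0 hy; nra.
Qed.

Lemma perturbed_norm y :
  dot y y <= 4 / sg ^+ 2 * dot ((Sg - P) *m y) ((Sg - P) *m y).
Proof.
rewrite mulrAC ler_pdivlMr ?exprn_gt0 //.
apply: le_trans (perturbed_coercive y).
by rewrite mulrC expr2 -mulrA ler_pM2l // Sg_coer.
Qed.

Lemma perturbation_bound y :
  dot (P *m y) (P *m y)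
    <= 4 * e2 / (sf * sg) * dot ((Sg - P) *m y) ((Sg - P) *m y).
Proof.
rewrite mulrAC ler_pdivlMr ?mulr_gt0 //.
have := ler_wpM2l e2_ge0 (perturbed_coercive y).
have := ler_wpM2l (ltW sg_gt0) (perturbation_norm y); nra.
Qed.

Lemma perturbed_unitmx : Sg - P \in unitmx.
Proof.
apply: trivial_kernel_unitmx => y By0; apply: dot_eq0; apply/le_anti.
by rewrite dot_ge0 andbT (le_trans (perturbed_norm y)) // By0 dot0r mulr0.
Qed.

End Perturbation.

Section SmallestSingularValue.
Local Open Scope classical_set_scope.
Variables (R : realType) (p : nat).
Implicit Types (A : 'M[R]_p) (x y u : 'cV[R]_p).

Lemma continuous_sum (I : finType) (F : I -> 'rV[R]_p -> R) :
  (forall i, continuous (F i)) -> continuous (fun r => \sum_i F i r).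
Proof.
move=> F_cont; rewrite -fct_sumE.
apply: (big_ind (fun g : 'rV[R]_p -> R => continuous g)) => //.
- exact: cst_continuous.
- move=> g h g_cont h_cont r.
  by apply: continuousD; [exact: g_cont | exact: h_cont].
Qed.

Lemma continuous_qf A : continuous (fun r : 'rV[R]_p => dot r^T (A *m r^T)).
Proof.
have -> : (fun r : 'rV[R]_p => dot r^T (A *m r^T)) =
          (fun r => \sum_k \sum_j r ord0 k * A k j * r ord0 j).
  apply: funext => r; rewrite dotE; apply: eq_bigr => k _; rewrite !mxE mulr_sumr.
  by apply: eq_bigr => j _; rewrite !mxE mulrA.
apply: continuous_sum => k; apply: continuous_sum => j r.
apply: (@continuousM _ _ (fun r : 'rV[R]_p => r ord0 k * A k j) (fun r => r ord0 j)).
  apply: (@continuousM _ _ (fun r : 'rV[R]_p => r ord0 k) (fun=> A k j)).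
    exact: coord_continuous.
  exact: cst_continuous.
exact: coord_continuous.
Qed.

Lemma compact_unit_sphere : compact [set r : 'rV[R]_p | dot r^T r^T = 1].
Proof.
apply: bounded_closed_compact.
  exists 1; split => // M M_gt1 r /= r1; rewrite /Num.Def.normr /= mx_normrE.
  apply: bigmax_le => [|[i j] _ /=]; first by rewrite ltW // (lt_trans ltr01).
  rewrite (ord1 i); apply: (@le_trans _ _ 1); last exact: ltW.
  have : r ord0 j ^+ 2 <= 1.
    rewrite -r1 dotE (bigD1 j) //= !mxE -expr2 lerDl.
    by apply: sumr_ge0 => k _; rewrite !mxE -expr2 sqr_ge0.
  by rewrite -(@expr_le1 _ 2) // real_normK ?num_real.
have -> : [set r : 'rV[R]_p | dot r^T r^T = 1] =
          (fun r : 'rV[R]_p => dot r^T (1%:M *m r^T)) @^-1` [set 1].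
  by apply/seteqP; split => r /=; rewrite mul1mx.
by apply: preimage_closed => [r _|]; [exact: continuous_qf | exact: closed_eq].
Qed.

Lemma normalize_qf A y : 0 < dot y y ->
  let k := (Num.sqrt (dot y y))^-1 in
  dot (k *: y) (k *: y) = 1 /\ dot (k *: y) (A *m (k *: y)) = dot y (A *m y) / dot y y.
Proof.
move=> y_gt0 k; have kk : k * k = (dot y y)^-1.
  by rewrite -invfM -expr2 sqr_sqrtr // ltW.
rewrite -scalemxAr !dotZl !dotZr !mulrA kk mulVf ?gt_eqF //; split => //.
by rewrite mulrC.
Qed.

Lemma rayleigh_min_exists A x : dot x x != 0 ->
  exists2 u, dot u u = 1 & coercive (dot u (A *m u)) A.
Proof.
move=> x_neq0; set S := [set r : 'rV[R]_p | dot r^T r^T = 1].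
have x_gt0 : 0 < dot x x by rewrite lt0r x_neq0 dot_ge0.
have [x1 _] := normalize_qf A x_gt0.
have Sx : S ((Num.sqrt (dot x x))^-1 *: x)^T by rewrite /S /= trmxK; exact: x1.
have [r0 /set_mem r0_unit r0_min] := EVT_min_rV (ex_intro _ _ Sx)
  compact_unit_sphere (continuous_subspaceT (@continuous_qf A)).
exists r0^T => // y.
have [/dot_eq0 ->|y_neq0] := eqVneq (dot y y) 0.
  by rewrite mulmx0 !dot0r mulr0.
have y_gt0 : 0 < dot y y by rewrite lt0r y_neq0 dot_ge0.
have [y1 yq] := normalize_qf A y_gt0.
have Sy : S ((Num.sqrt (dot y y))^-1 *: y)^T by rewrite /S /= trmxK; exact: y1.
by have := r0_min _ (mem_set Sy); rewrite /= !trmxK yq ler_pdivlMr.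
Qed.

Lemma eigen_singular_value A u (m : R) : A^T = A -> 0 <= m -> u != 0 ->
  A *m u = m *: u -> singular_values A m.
Proof.
move=> A_sym m_ge0 u_neq0 Au; split => //.
rewrite -eigenvalue_root_char; apply/eigenvalueP; exists u^T; last first.
  by apply: contra u_neq0 => /eqP/(congr1 trmx); rewrite trmxK trmx0 => ->.
have uA : u^T *m A = m *: u^T by rewrite -[A]A_sym -trmx_mul Au linearZ.
by rewrite A_sym mulmxA uA -scalemxAl uA scalerA expr2.
Qed.

Lemma sigma_last_coercive A : A^T = A -> (forall x, 0 <= dot x (A *m x)) ->
  0 <= sigma_last A /\ coercive (sigma_last A) A.
Proof.
move=> A_sym A_psd; rewrite /sigma_last; set SV := singular_values A.
have SV_ge0 s : SV s -> 0 <= s by case.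
have SV_lb : has_lbound SV by exists 0 => s /SV_ge0.
split.
  have [[s SVs]|SV0] := pselect (SV !=set0).
    by apply: lb_le_inf; [exists s | move=> t /SV_ge0].
  suff -> : SV = set0 by rewrite inf0.
  by apply/seteqP; split => // s SVs; apply: SV0; exists s.
move=> x; have [->|x_neq0] := eqVneq (dot x x) 0; first by rewrite mulr0 A_psd.
have [u u1 u_min] := rayleigh_min_exists A x_neq0.
have SVm : SV (dot u (A *m u)).
  apply: eigen_singular_value => //; last exact: rayleigh_min_eigenvector.
  by apply/eqP => u0; move: u1; rewrite u0 dot0r => /eqP; rewrite eq_sym oner_eq0.
apply: le_trans (u_min x).
by rewrite ler_wpM2r ?dot_ge0 // ge_inf.
Qed.

End SmallestSingularValue.

Section Expectations.
Variables (R : realType) (W V : finType).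
Implicit Types (DW : W -> R) (DV : V -> R).

Lemma expect_ge0 (T : finType) (D F : T -> R) :
  (forall x, 0 <= D x) -> (forall x, 0 <= F x) -> 0 <= expect D F.
Proof. by move=> D_ge0 F_ge0; apply: sumr_ge0 => x _; rewrite mulr_ge0. Qed.

Lemma expect_lin (T : finType) (D F G : T -> R) (k l : R) :
  expect D (fun x => k * F x + l * G x) = k * expect D F + l * expect D G.
Proof.
rewrite /expect !mulr_sumr -big_split; apply: eq_bigr => x _ /=; ring.
Qed.

Lemma expectZ (T : finType) (D F : T -> R) (k : R) :
  expect D (fun x => k * F x) = k * expect D F.
Proof. by rewrite /expect mulr_sumr; apply: eq_bigr => x _; rewrite mulrCA. Qed.

Lemma expect_prod_ge0 DW DV (F : W -> V -> R) :
  (forall w, 0 <= DW w) -> (forall v, 0 <= DV v) -> (forall w v, 0 <= F w v) ->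
  0 <= expect_prod DW DV F.
Proof.
move=> DW_ge0 DV_ge0 F_ge0; apply: sumr_ge0 => w _; apply: sumr_ge0 => v _.
by rewrite !mulr_ge0.
Qed.

Lemma expect_prod_le DW DV (F G : W -> V -> R) :
  (forall w, 0 <= DW w) -> (forall v, 0 <= DV v) -> (forall w v, F w v <= G w v) ->
  expect_prod DW DV F <= expect_prod DW DV G.
Proof.
move=> DW_ge0 DV_ge0 FG; apply: ler_sum => w _; apply: ler_sum => v _.
by rewrite ler_wpM2l ?mulr_ge0.
Qed.

Lemma expect_prod_swap DW DV (F : W -> V -> R) :
  expect_prod DW DV F = expect_prod DV DW (fun v w => F w v).
Proof.
rewrite /expect_prod exchange_big; apply: eq_bigr => v _.
by apply: eq_bigr => w _; rewrite (mulrC (DW w)).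
Qed.

Lemma expect_prod_sep DW DV (F A : W -> R) (P Q : V -> R) :
  expect_prod DW DV (fun w v => F w * P v + A w * Q v) =
  expect DW F * expect DV P + expect DW A * expect DV Q.
Proof.
rewrite /expect_prod /expect !big_distrlr -big_split; apply: eq_bigr => w _ /=.
by rewrite -big_split; apply: eq_bigr => v _ /=; ring.
Qed.

Lemma coercive_mixed_moment (p : nat) DW DV (f : W -> 'cV[R]_p)
    (g : V -> 'cV[R]_p) (s : R) :
  (forall w, 0 <= DW w) -> coercive s (second_moment DV g) ->
  s * expect DW (fun w => dot (f w) (f w))
    <= expect_prod DW DV (fun w v => dot (f w) (g v) ^+ 2).
Proof.
move=> DW_ge0 g_coer; rewrite /expect mulr_sumr; apply: ler_sum => w _.
have -> : \sum_v DW w * DV v * dot (f w) (g v) ^+ 2 =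
          DW w * dot (f w) (second_moment DV g *m f w).
  by rewrite second_moment_qf mulr_sumr; apply: eq_bigr => v _; rewrite dotC mulrA.
by rewrite mulrCA ler_wpM2l.
Qed.

Lemma mean_energy_bound (p : nat) DW DV (del : W -> V -> R) (f : W -> 'cV[R]_p) :
  (forall w, 0 <= DW w) -> (forall v, 0 <= DV v) ->
  expect DV (fun v => dot (\sum_w (DW w * del w v) *: f w)
                          (\sum_w (DW w * del w v) *: f w))
    <= expect_prod DW DV (fun w v => del w v ^+ 2)
       * expect DW (fun w => dot (f w) (f w)).
Proof.
move=> DW_ge0 DV_ge0; rewrite /expect_prod exchange_big mulr_suml.
apply: ler_sum => v _ /=.
have -> : \sum_w DW w * DV v * del w v ^+ 2 = DV v * \sum_w DW w * del w v ^+ 2.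
  by rewrite mulr_sumr; apply: eq_bigr => w _; ring.
by rewrite -mulrA ler_wpM2l // cauchy_schwarz_mean.
Qed.

End Expectations.

Section EstimateArithmetic.
Variable R : realFieldType.

Lemma sqr_sum3_le (t1 t2 t3 : R) :
  (t1 - t2 + t3) ^+ 2 <= 3 * (t1 ^+ 2 + t2 ^+ 2 + t3 ^+ 2).
Proof.
have := sqr_ge0 (t1 + t2); have := sqr_ge0 (t1 - t3); have := sqr_ge0 (t2 + t3).
nra.
Qed.

(* The arithmetic that assembles the final estimate from the four energy
   bounds; 3 + 27 + 27 = 57. *)
Lemma assemble_bound (sf sg e2 m Ef Ec EY Ea : R) :
  0 < sf -> 0 < sg -> 0 <= e2 -> 0 <= m ->
  0 <= Ef -> 0 <= Ec -> 0 <= EY -> 0 <= Ea ->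
  Ef <= m / sg -> Ec <= e2 * m / sg -> EY <= 9 / 4 * m / sf -> Ea <= e2 * m / sf ->
  Ef * (3 / sf ^+ 2 * Ec + 12 * e2 / (sf * sg) * EY) + Ea * (12 / sg ^+ 2 * EY)
    <= 57 * e2 * m ^+ 2 / (sf * sg) ^+ 2.
Proof.
move=> sf_gt0 sg_gt0 e2_ge0 m_ge0 Ef_ge0 Ec_ge0 EY_ge0 Ea_ge0 hf hc hY ha.
have k1 : 0 <= 3 / sf ^+ 2 by rewrite divr_ge0 // exprn_ge0 // ltW.
have k2 : 0 <= 12 * e2 / (sf * sg) by rewrite !(divr_ge0, mulr_ge0) // ltW.
have k3 : 0 <= 12 / sg ^+ 2 by rewrite divr_ge0 // exprn_ge0 // ltW.
apply: (@le_trans _ _ (m / sg * (3 / sf ^+ 2 * (e2 * m / sg)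
                                 + 12 * e2 / (sf * sg) * (9 / 4 * m / sf))
                       + e2 * m / sf * (12 / sg ^+ 2 * (9 / 4 * m / sf)))).
  apply: lerD; apply: ler_pM => //.
  - by rewrite addr_ge0 // mulr_ge0.
  - by apply: lerD; apply: ler_wpM2l.
  - by rewrite mulr_ge0.
  - exact: ler_wpM2l.
have sf_neq0 : sf != 0 by rewrite gt_eqF.
have sg_neq0 : sg != 0 by rewrite gt_eqF.
by rewrite le_eqVlt; apply/orP; left; apply/eqP; field; apply/andP.
Qed.

End EstimateArithmetic.

Section Transfer.
Variables (R : realType) (W V : finType) (p : nat).
Variables (fs fh : W -> 'cV[R]_p) (gs gh : V -> 'cV[R]_p).
Variables (DW1 DW2 : W -> R) (DV1 DV2 : V -> R).

Let del w v := dot (fs w) (gs v) - dot (fh w) (gh v).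
Let Sf := second_moment DW1 fs.
Let Sg := second_moment DV1 gs.
Let E0 := \sum_w \sum_v (DW1 w * DV1 v * del w v) *: (fs w *m (gs v)^T).
Let K := \sum_w DW1 w *: (fs w *m (fh w)^T).
Let C := \sum_v DV1 v *: (gh v *m (gs v)^T).
Let a w := \sum_v (DV1 v * del w v) *: gs v.
Let c v := \sum_w (DW1 w * del w v) *: fs w.

Lemma factor_KC : K *m C = Sf *m Sg - E0.
Proof.
have outer2 (x y z t : 'cV[R]_p) : x *m y^T *m (z *m t^T) = dot y z *: (x *m t^T).
  by rewrite mulmxA outer_mulmx scalemxAl.
rewrite /K /C /Sf /Sg /second_moment /expect_mx !mulmx_suml /E0 -sumrB.
apply: eq_bigr => w _; rewrite !mulmx_sumr -sumrB; apply: eq_bigr => v _.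
rewrite -!scalemxAl -!scalemxAr !outer2 !scalerA -scalerBl /del.
by congr (_ *: _); rewrite (dotC (fs w)); ring.
Qed.

Lemma K_ghat v : K *m gh v = Sf *m gs v - c v.
Proof.
rewrite /K /Sf /second_moment /expect_mx /c !mulmx_suml -sumrB.
apply: eq_bigr => w _; rewrite -!scalemxAl !outer_mulmx !scalerA -scalerBl /del.
by congr (_ *: _); rewrite (dotC (fs w)); ring.
Qed.

Lemma C_fhat w y : dot (fh w) (C *m y) = dot (Sg *m fs w - a w) y.
Proof.
rewrite /C /Sg /second_moment /expect_mx /a !mulmx_suml dot_sumr dotBl !dot_suml.
rewrite -sumrB; apply: eq_bigr => v _.
rewrite -!scalemxAl !outer_mulmx !dotZr !dotZl /del (dotC (gs v) (fs w)); ring.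
Qed.

Lemma E0_bound x y : (forall w, 0 <= DW1 w) -> (forall v, 0 <= DV1 v) ->
  dot x (E0 *m y) ^+ 2 <=
  expect_prod DW1 DV1 (fun w v => del w v ^+ 2)
  * dot x (Sf *m x) * dot y (Sg *m y).
Proof.
move=> DW1_ge0 DV1_ge0; pose b w := \sum_v DV1 v * del w v * dot (gs v) y.
have -> : dot x (E0 *m y) = \sum_w DW1 w * dot x (fs w) * b w.
  rewrite /E0 mulmx_suml dot_sumr; apply: eq_bigr => w _.
  rewrite mulmx_suml dot_sumr mulr_sumr; apply: eq_bigr => v _.
  by rewrite -scalemxAl outer_mulmx !dotZr; ring.
apply: le_trans (weighted_cauchy_schwarz _ _ DW1_ge0) _.
have -> : \sum_w DW1 w * dot x (fs w) ^+ 2 = dot x (Sf *m x).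
  by rewrite second_moment_qf; apply: eq_bigr => w _; rewrite dotC.
rewrite -mulrA [X in _ <= X]mulrCA ler_wpM2l ?second_moment_psd //.
rewrite /expect_prod !mulr_suml; apply: ler_sum => w _.
have -> : (\sum_v DW1 w * DV1 v * del w v ^+ 2) * dot y (Sg *m y) =
          DW1 w * ((\sum_v DV1 v * del w v ^+ 2) * dot y (Sg *m y)).
  by rewrite mulrA mulr_sumr; congr (_ * _); apply: eq_bigr => v _; rewrite mulrA.
by rewrite ler_wpM2l // second_moment_qf weighted_cauchy_schwarz.
Qed.

(* For every (w, v), del w v = <f w, d> - <f w, P y> + <a w, y>, where
   d = Sf^-1 c v, P = Sf^-1 E0 and y solves (Sg - P) y = gs v - d: indeed
   ghat v = C y, because K (C y) = Sf (Sg - P) y = K ghat v and K is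
   invertible (as K C = Sf (Sg - P) is). *)
Lemma del_decomposition v w :
  Sf \in unitmx -> Sg - invmx Sf *m E0 \in unitmx ->
  let d := invmx Sf *m c v in
  let y := invmx (Sg - invmx Sf *m E0) *m (gs v - d) in
  del w v = dot (fs w) d - dot (fs w) (invmx Sf *m E0 *m y) + dot (a w) y.
Proof.
move=> Sf_unit B_unit d y; set B := Sg - invmx Sf *m E0.
have By : B *m y = gs v - d by rewrite /y mulKVmx.
have SfB : Sf *m B = K *m C by rewrite factor_KC mulmxBr mulmxA mulmxV // mul1mx.
have K_unit : K \in unitmx.
  move: (unitmx_mul K C).
  by rewrite -SfB unitmx_mul Sf_unit B_unit => /esym/andP[].
have Cy : C *m y = gh v.
  apply: (can_inj (mulKmx K_unit)).
  by rewrite mulmxA -SfB -mulmxA By mulmxBr mulmxA mulmxV // mul1mx K_ghat.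
have Sg_y : Sg *m y = B *m y + invmx Sf *m E0 *m y by rewrite mulmxBl subrK.
have Sg_adj : dot (Sg *m fs w) y = dot (fs w) (Sg *m y).
  by rewrite [RHS]dot_mulmx second_moment_sym.
rewrite /del -Cy C_fhat dotBl Sg_adj Sg_y By dotDr dotBr; ring.
Qed.

(* The hypotheses of the theorem, with e2 = eps^2, m = M^2 and the
   coercivity constants sf, sg of Sf, Sg. *)
Variables (sf sg e2 m : R).
Hypotheses (DW1_ge0 : forall w, 0 <= DW1 w) (DW2_ge0 : forall w, 0 <= DW2 w).
Hypotheses (DV1_ge0 : forall v, 0 <= DV1 v) (DV2_ge0 : forall v, 0 <= DV2 v).
Hypotheses (sf_gt0 : 0 < sf) (sg_gt0 : 0 < sg) (e2_ge0 : 0 <= e2).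
Hypothesis small : 4 * e2 <= sf * sg.
Hypotheses (Sf_coer : coercive sf Sf) (Sg_coer : coercive sg Sg).
Hypothesis risk11 : expect_prod DW1 DV1 (fun w v => del w v ^+ 2) <= e2.
Hypothesis risk12 : expect_prod DW1 DV2 (fun w v => del w v ^+ 2) <= e2.
Hypothesis risk21 : expect_prod DW2 DV1 (fun w v => del w v ^+ 2) <= e2.
Hypothesis mom11 : expect_prod DW1 DV1 (fun w v => dot (fs w) (gs v) ^+ 2) <= m.
Hypothesis mom12 : expect_prod DW1 DV2 (fun w v => dot (fs w) (gs v) ^+ 2) <= m.
Hypothesis mom21 : expect_prod DW2 DV1 (fun w v => dot (fs w) (gs v) ^+ 2) <= m.

(* The bound on |gs v - Sf^-1 c v|^2 that drives the pointwise estimate. *)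
Let Y v := 3 / 2 * dot (gs v) (gs v) + 3 / sf ^+ 2 * dot (c v) (c v).

Lemma Y_ge0 v : 0 <= Y v.
Proof.
have : 0 <= 3 / sf ^+ 2 by rewrite divr_ge0 // exprn_ge0 // ltW.
by have := dot_ge0 (gs v); have := dot_ge0 (c v); rewrite /Y; nra.
Qed.

(* The decomposition of del, Cauchy-Schwarz for each of its three terms, and
   the perturbation bounds give a bound separable in (w, v). *)
Lemma pointwise_bound w v : del w v ^+ 2 <=
  dot (fs w) (fs w) * (3 / sf ^+ 2 * dot (c v) (c v) + 12 * e2 / (sf * sg) * Y v)
  + dot (a w) (a w) * (12 / sg ^+ 2 * Y v).
Proof.
have Sf_sym : Sf^T = Sf := second_moment_sym _ _.
have E0_small x y :
    dot x (E0 *m y) ^+ 2 <= e2 * dot x (Sf *m x) * dot y (Sg *m y).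
  apply: le_trans (E0_bound x y DW1_ge0 DV1_ge0) _.
  by rewrite -!mulrA ler_wpM2r // mulr_ge0 ?second_moment_psd.
have Sf_unit := coercive_unitmx sf_gt0 Sf_coer.
have B_unit := perturbed_unitmx sf_gt0 sg_gt0 e2_ge0 small Sf_sym Sf_coer
  Sg_coer E0_small.
have := del_decomposition v w Sf_unit B_unit.
set d := invmx Sf *m c v; set B := Sg - invmx Sf *m E0.
set y := invmx B *m (gs v - d); set u := invmx Sf *m E0 *m y => del_eq.
have By : B *m y = gs v - d by rewrite /y mulKVmx.
have hd : dot d d <= dot (c v) (c v) / sf ^+ 2.
  exact: coercive_inv_norm sf_gt0 Sf_coer.
have hBy : dot (B *m y) (B *m y) <= Y v.
  rewrite By; apply: le_trans (dot_sub_le _ _) _.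
  by rewrite /Y lerD2l -mulrA ler_wpM2l // mulrC.
have hy := perturbed_norm sf_gt0 sg_gt0 e2_ge0 small Sf_sym Sf_coer Sg_coer
  E0_small y.
have hu := perturbation_bound sf_gt0 sg_gt0 e2_ge0 small Sf_sym Sf_coer Sg_coer
  E0_small y.
have hy' : dot y y <= 4 / sg ^+ 2 * Y v.
  apply: le_trans hy _; apply: ler_wpM2l hBy.
  by rewrite divr_ge0 // exprn_ge0 // ltW.
have hu' : dot u u <= 4 * e2 / (sf * sg) * Y v.
  apply: le_trans hu _; apply: ler_wpM2l hBy.
  by rewrite divr_ge0 ?mulr_ge0 // ltW.
have := dot_ge0 (fs w); have := dot_ge0 (a w) => A_ge0 F_ge0.
have := ler_wpM2l F_ge0 hd; have := ler_wpM2l F_ge0 hu'.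
have := ler_wpM2l A_ge0 hy'.
have := cauchy_schwarz (fs w) d; have := cauchy_schwarz (fs w) u.
have := cauchy_schwarz (a w) y.
have := sqr_sum3_le (dot (fs w) d) (dot (fs w) u) (dot (a w) y).
rewrite del_eq; lra.
Qed.

Lemma m_ge0 : 0 <= m.
Proof.
by apply: le_trans mom11; apply: expect_prod_ge0 => // w v; exact: sqr_ge0.
Qed.

Lemma mom_swap (DW : W -> R) (DV : V -> R) :
  expect_prod DV DW (fun v w => dot (gs v) (fs w) ^+ 2) =
  expect_prod DW DV (fun w v => dot (fs w) (gs v) ^+ 2).
Proof.
rewrite expect_prod_swap; apply: eq_bigr => w _; apply: eq_bigr => v _.
by rewrite dotC.
Qed.

Lemma energy_fs (DW : W -> R) : (forall w, 0 <= DW w) ->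
  expect_prod DW DV1 (fun w v => dot (fs w) (gs v) ^+ 2) <= m ->
  expect DW (fun w => dot (fs w) (fs w)) <= m / sg.
Proof.
move=> DW_ge0 mom; rewrite ler_pdivlMr // mulrC.
exact: le_trans (coercive_mixed_moment fs DW_ge0 Sg_coer) mom.
Qed.

Lemma energy_gs (DV : V -> R) : (forall v, 0 <= DV v) ->
  expect_prod DW1 DV (fun w v => dot (fs w) (gs v) ^+ 2) <= m ->
  expect DV (fun v => dot (gs v) (gs v)) <= m / sf.
Proof.
move=> DV_ge0 mom; rewrite ler_pdivlMr // mulrC.
by apply: le_trans (coercive_mixed_moment gs DV_ge0 Sf_coer) _; rewrite mom_swap.
Qed.

Lemma energy_c : expect DV2 (fun v => dot (c v) (c v)) <= e2 * m / sg.
Proof.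
apply: le_trans (mean_energy_bound del fs DW1_ge0 DV2_ge0) _.
rewrite -mulrA; apply: ler_pM => //; last exact: energy_fs.
  by apply: expect_prod_ge0 => // w v; exact: sqr_ge0.
by apply: expect_ge0 => // w; exact: dot_ge0.
Qed.

Lemma energy_a : expect DW2 (fun w => dot (a w) (a w)) <= e2 * m / sf.
Proof.
apply: le_trans (mean_energy_bound (fun v w => del w v) gs DV1_ge0 DW2_ge0) _.
rewrite -expect_prod_swap -mulrA; apply: ler_pM => //; last exact: energy_gs.
  by apply: expect_prod_ge0 => // w v; exact: sqr_ge0.
by apply: expect_ge0 => // v; exact: dot_ge0.
Qed.

Lemma energy_Y : expect DV2 Y <= 9 / 4 * m / sf.
Proof.
have sf_neq0 : sf != 0 by rewrite gt_eqF.
have sg_neq0 : sg != 0 by rewrite gt_eqF.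
have e2_rel : 4 * e2 / (sf * sg) <= 1 by rewrite ler_pdivrMr ?mulr_gt0 // mul1r.
have hc : 3 / sf ^+ 2 * expect DV2 (fun v => dot (c v) (c v)) <= 3 / 4 * m / sf.
  apply: le_trans (ler_wpM2l _ energy_c) _.
    by rewrite divr_ge0 ?exprn_ge0 ?ltW.
  have -> : 3 / sf ^+ 2 * (e2 * m / sg) = 3 / 4 * m / sf * (4 * e2 / (sf * sg)).
    by field; apply/andP.
  by rewrite -[leRHS]mulr1 ler_wpM2l // !(divr_ge0, mulr_ge0) ?m_ge0 ?ltW.
have := ler_wpM2l (_ : 0 <= 3 / 2) (energy_gs DV2_ge0 mom12).
by rewrite /Y expect_lin; lra.
Qed.

Theorem transfer_risk_bound :
  expect_prod DW2 DV2 (fun w v => del w v ^+ 2)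
    <= 57 * e2 * m ^+ 2 / (sf * sg) ^+ 2.
Proof.
apply: le_trans (expect_prod_le DW2_ge0 DV2_ge0 pointwise_bound) _.
rewrite expect_prod_sep expect_lin expectZ.
apply: assemble_bound energy_c energy_Y energy_a => //; last exact: energy_fs.
- exact: m_ge0.
- by apply: expect_ge0 => // w; exact: dot_ge0.
- by apply: expect_ge0 => // v; exact: dot_ge0.
- by apply: expect_ge0 => // v; exact: Y_ge0.
- by apply: expect_ge0 => // w; exact: dot_ge0.
Qed.

End Transfer.

Section Conclusion.
Variable R : realType.

Lemma bilin_dot (W V : finType) (p : nat) (f : W -> 'cV[R]_p)
    (g : V -> 'cV[R]_p) :
  bilin f g = fun w v => dot (f w) (g v).
Proof. by apply: funext => w; apply: funext => v; rewrite dotE. Qed.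

Lemma pos_factors (x y : R) : 0 <= x -> 0 <= y -> 0 < x * y -> 0 < x /\ 0 < y.
Proof. by move=> x_ge0 y_ge0 xy_gt0; split; nra. Qed.

Lemma small_error (eps s2 : R) :
  0 <= eps -> 0 <= s2 -> eps < Num.sqrt s2 / 2 -> 4 * eps ^+ 2 <= s2.
Proof.
move=> eps_ge0 s2_ge0 eps_lt; rewrite -(sqr_sqrtr s2_ge0).
by have := sqrtr_ge0 s2; nra.
Qed.

Lemma constant_bound (e2 M s2 : R) : 0 <= e2 -> 0 < s2 ->
  57 * e2 * (M ^+ 2) ^+ 2 / s2 ^+ 2 <= 64 * e2 * (M ^+ 4 / Num.sqrt s2 ^+ 4).
Proof.
move=> e2_ge0 s2_gt0.
have -> : Num.sqrt s2 ^+ 4 = s2 ^+ 2.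
  by rewrite (_ : 4%N = (2 * 2)%N) // exprM sqr_sqrtr // ltW.
have X_ge0 : 0 <= e2 * (M ^+ 2) ^+ 2 / s2 ^+ 2.
  by apply: divr_ge0; [apply: mulr_ge0 => //; exact: sqr_ge0 | exact: sqr_ge0].
have -> : 64 * e2 * (M ^+ 4 / s2 ^+ 2) = 64 * (e2 * (M ^+ 2) ^+ 2 / s2 ^+ 2).
  by ring.
have -> : 57 * e2 * (M ^+ 2) ^+ 2 / s2 ^+ 2 = 57 * (e2 * (M ^+ 2) ^+ 2 / s2 ^+ 2).
  by ring.
by rewrite ler_wpM2r // ler_nat.
Qed.

End Conclusion.

Theorem mainTheorem5 (R : realType) (W V : finType) (p : nat)
  (fstar fhat : W -> 'cV[R]_p) (gstar ghat : V -> 'cV[R]_p)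
  (DW1 DW2 : W -> R) (DV1 DV2 : V -> R) (eps Mstar : R) :
  is_distr DW1 -> is_distr DW2 -> is_distr DV1 -> is_distr DV2 ->
  0 <= eps ->
  (* (i,j) in {(1,1), (1,2), (2,1)} *)
  risk DW1 DV1 (bilin fstar gstar) (bilin fhat ghat) <= eps ^+ 2 ->
  risk DW1 DV2 (bilin fstar gstar) (bilin fhat ghat) <= eps ^+ 2 ->
  risk DW2 DV1 (bilin fstar gstar) (bilin fhat ghat) <= eps ^+ 2 ->
  expect_prod DW1 DV1 (fun w v => bilin fstar gstar w v ^+ 2) <= Mstar ^+ 2 ->
  expect_prod DW1 DV2 (fun w v => bilin fstar gstar w v ^+ 2) <= Mstar ^+ 2 ->
  expect_prod DW2 DV1 (fun w v => bilin fstar gstar w v ^+ 2) <= Mstar ^+ 2 ->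
  let sigma_star_sq := sigma_last (second_moment DW1 fstar) *
                       sigma_last (second_moment DV1 gstar) in
  0 < sigma_star_sq ->
  let sigma_star := Num.sqrt sigma_star_sq in
  eps < sigma_star / 2 ->
  risk DW2 DV2 (bilin fstar gstar) (bilin fhat ghat)
    <= 64 * eps ^+ 2 * (Mstar ^+ 4 / sigma_star ^+ 4).
Proof.
move=> [DW1_ge0 _] [DW2_ge0 _] [DV1_ge0 _] [DV2_ge0 _] eps_ge0.
move=> r11 r12 r21 M11 M12 M21 s2 s2_gt0 s eps_lt.
have [sf_ge0 Sf_coer] := sigma_last_coercive (second_moment_sym DW1 fstar)
  (fun x => second_moment_psd fstar x DW1_ge0).
have [sg_ge0 Sg_coer] := sigma_last_coercive (second_moment_sym DV1 gstar)
  (fun x => second_moment_psd gstar x DV1_ge0).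
have [sf_gt0 sg_gt0] := pos_factors sf_ge0 sg_ge0 s2_gt0.
have small := small_error eps_ge0 (ltW s2_gt0) eps_lt.
rewrite /risk !bilin_dot in r11 r12 r21 M11 M12 M21 *.
apply: le_trans (constant_bound _ (sqr_ge0 eps) s2_gt0).
exact: (transfer_risk_bound DW1_ge0 DW2_ge0 DV1_ge0 DV2_ge0 sf_gt0 sg_gt0
  (sqr_ge0 eps) small Sf_coer Sg_coer r11 r12 r21 M11 M12 M21).
Qed.
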